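(* Let $G$ be a finitely generated group and let $A$ be a finite symmetric generating set of $G$. Equip $G$ with the word metric $\delta_A$. Then for every real $r\geqslant 0$ there exists a minimal $r$-net in the metric space $(G,\delta_A)$.
   Context: A set $A\subseteq G$ is symmetric if $A=A^{-1}$. The word metric is $\delta_A(x,y)=$ the least $n\geqslant 0$ such that $x^{-1}y$ is a product of $n$ elements of $A\cup\{1\}$. In a metric space $(X,\delta)$, an $r$-net is a subset $N\subseteq X$ such that for every $x\in X$ there is $z\in N$ with $\delta(x,z)\leqslant r$; a minimal $r$-net is an $r$-net no proper subset of which is an $r$-net. *)

From Stdlib Require Import Reals List.
Open Scope R_scope.

Section GroupDefs.
Context {G : Type} (mul : G -> G -> G) (inv : G -> G) (e : G).

Definition is_group : Prop :=
  (forall x y z, mul x (mul y z) = mul (mul x y) z) /\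
  (forall x, mul e x = x) /\ (forall x, mul x e = x) /\
  (forall x, mul (inv x) x = e) /\ (forall x, mul x (inv x) = e).

Definition lprod (l : list G) : G := fold_right mul e l.

Definition finite_set (A : G -> Prop) : Prop :=
  exists l : list G, forall x, A x <-> In x l.

Definition symmetric_set (A : G -> Prop) : Prop :=
  forall x, A x <-> A (inv x).

Definition generates (A : G -> Prop) : Prop :=
  forall g, exists l : list G,
    (forall a, In a l -> A a \/ A (inv a)) /\ lprod l = g.

Definition prod_of_len (A : G -> Prop) (n : nat) (g : G) : Prop :=
  exists l : list G, length l = n /\ (forall a, In a l -> A a \/ a = e) /\ lprod l = g.

(* word_metric A x y n : delta_A(x,y) = n, i.e. n is the least natural number
   such that x^{-1} y is a product of n elements of A ∪ {1} *)
Definition word_metric (A : G -> Prop) (x y : G) (n : nat) : Prop :=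
  prod_of_len A n (mul (inv x) y) /\
  (forall m, prod_of_len A m (mul (inv x) y) -> (n <= m)%nat).

Definition is_r_net (A : G -> Prop) (r : R) (N : G -> Prop) : Prop :=
  forall x, exists z n, N z /\ word_metric A x z n /\ INR n <= r.

Definition is_minimal_r_net (A : G -> Prop) (r : R) (N : G -> Prop) : Prop :=
  is_r_net A r N /\
  forall N' : G -> Prop,
    (forall x, N' x -> N x) -> (exists x, N x /\ ~ N' x) -> ~ is_r_net A r N'.

End GroupDefs.

(* G is countable, being enumerated by the words over the finite set A. Going
   through an enumeration and keeping each point at distance > r from all points
   kept so far yields a maximal r-separated set N. By maximality every point lies
   within distance r of N, so N is an r-net; by separation a point x of N is
   within distance r of no other point of N, so no proper subset of N is an
   r-net. *)
From Stdlib Require Import Reals List Classical ClassicalEpsilon Lia Cantor Wf_nat.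
Open Scope R_scope.

Section Enumeration.
Context {X T : Type}.

Fixpoint words (l : list X) (n : nat) : list (list X) :=
  match n with
  | O => nil :: nil
  | S n => flat_map (fun w => map (fun a => a :: w) l) (words l n)
  end.

Lemma in_words (l w : list X) : incl w l -> In w (words l (length w)).
Proof.
  induction w as [|a w IH]; simpl; intros Hw; [now left|].
  apply in_flat_map. exists w. split.
  - apply IH. intros b Hb. apply Hw. now right.
  - apply in_map_iff. exists a. split; [reflexivity|]. apply Hw. now left.
Qed.

Lemma surj_of_words (l : list X) (h : list X -> T) (t0 : T) :
  (forall t, exists w, incl w l /\ h w = t) -> exists f : nat -> T, forall t, exists n, f n = t.
Proof.
  intros Hh.
  exists (fun n => let '(k, i) := of_nat n in nth i (map h (words l k)) t0).
  intros t. destruct (Hh t) as [w [Hw <-]].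
  destruct (In_nth _ _ t0 (in_map h _ _ (in_words l w Hw))) as [i [_ Hi]].
  exists (to_nat (length w, i)). now rewrite cancel_of_to.
Qed.

End Enumeration.

Section MaximalIndependentSet.
Context {T : Type} (close : T -> T -> Prop).
Hypothesis close_refl : forall x, close x x.
Hypothesis close_sym : forall x y, close x y -> close y x.

Definition independent (N : T -> Prop) : Prop :=
  forall x y, N x -> N y -> close x y -> x = y.

Definition dominating (N : T -> Prop) : Prop :=
  forall x, exists z, N z /\ close x z.

Lemma independent_dominating_incl (N N' : T -> Prop) :
  independent N -> (forall x, N' x -> N x) -> dominating N' -> forall x, N x -> N' x.
Proof.
  intros HN Hsub HN' x Nx. destruct (HN' x) as [z [N'z Hxz]].
  now rewrite (HN x z Nx (Hsub z N'z) Hxz).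
Qed.

Variable f : nat -> T.
Hypothesis f_surj : forall x, exists n, f n = x.

Fixpoint greedy (n : nat) : list T :=
  match n with
  | O => nil
  | S n =>
      if excluded_middle_informative (forall y, In y (greedy n) -> ~ close (f n) y)
      then f n :: greedy n else greedy n
  end.

Lemma greedy_mono n m : (n <= m)%nat -> incl (greedy n) (greedy m).
Proof.
  induction 1 as [|m _ IH]; [apply incl_refl|]. simpl.
  destruct excluded_middle_informative; [apply incl_tl|]; exact IH.
Qed.

Lemma greedy_independent n x y : In x (greedy n) -> In y (greedy n) -> close x y -> x = y.
Proof.
  induction n as [|n IH]; simpl; [tauto|].
  destruct excluded_middle_informative as [Hsep|]; [|apply IH].
  intros [<-|Hx] [<-|Hy] Hxy; auto.
  - now destruct (Hsep y Hy).
  - now destruct (Hsep x Hx (close_sym _ _ Hxy)).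
Qed.

Lemma greedy_dominates n : exists y, In y (greedy (S n)) /\ close (f n) y.
Proof.
  simpl. destruct excluded_middle_informative as [_|Hsep].
  - exists (f n). split; [now left|apply close_refl].
  - apply not_all_ex_not in Hsep as [y Hy].
    apply imply_to_and in Hy as [Hy Hc].
    exists y. split; [exact Hy|exact (NNPP _ Hc)].
Qed.

Lemma exists_independent_dominating : exists N, independent N /\ dominating N.
Proof.
  exists (fun x => exists n, In x (greedy n)). split.
  - intros x y [nx Hx] [ny Hy].
    apply (greedy_independent (Nat.max nx ny));
      [apply (greedy_mono nx)|apply (greedy_mono ny)]; auto; lia.
  - intros x. destruct (f_surj x) as [n <-].
    destruct (greedy_dominates n) as [y [Hy Hc]]. eauto.
Qed.

End MaximalIndependentSet.

Section WordMetric.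
Context {G : Type} (mul : G -> G -> G) (inv : G -> G) (e : G).
Hypothesis HG : is_group mul inv e.

Lemma mulA x y z : mul x (mul y z) = mul (mul x y) z.
Proof. apply HG. Qed.

Lemma mul1g x : mul e x = x.
Proof. apply HG. Qed.

Lemma mulg1 x : mul x e = x.
Proof. apply HG. Qed.

Lemma mulVg x : mul (inv x) x = e.
Proof. apply HG. Qed.

Lemma mulgV x : mul x (inv x) = e.
Proof. apply HG. Qed.

Lemma inv_unique a b : mul a b = e -> b = inv a.
Proof.
  intros Hab. now rewrite <- (mul1g b), <- (mulVg a), <- mulA, Hab, mulg1.
Qed.

Lemma invMg a b : inv (mul a b) = mul (inv b) (inv a).
Proof.
  symmetry. apply inv_unique.
  now rewrite mulA, <- (mulA a b), mulgV, mulg1, mulgV.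
Qed.

Lemma invgK a : inv (inv a) = a.
Proof. symmetry. apply inv_unique, mulVg. Qed.

Lemma inv1 : inv e = e.
Proof. symmetry. apply inv_unique, mul1g. Qed.

Lemma lprod_app l1 l2 : lprod mul e (l1 ++ l2) = mul (lprod mul e l1) (lprod mul e l2).
Proof.
  induction l1 as [|a l1 IH]; simpl; [now rewrite mul1g|].
  unfold lprod in *. now rewrite IH, mulA.
Qed.

Lemma lprod_rev_inv l : lprod mul e (rev (map inv l)) = inv (lprod mul e l).
Proof.
  induction l as [|a l IH]; simpl; [now rewrite inv1|].
  rewrite lprod_app, IH, invMg. unfold lprod. simpl. now rewrite mulg1.
Qed.

Variable A : G -> Prop.

Lemma prod_of_len_inv n g :
  symmetric_set inv A -> prod_of_len mul e A n g -> prod_of_len mul e A n (inv g).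
Proof.
  intros Asym [l [Hl [HA Hg]]]. exists (rev (map inv l)). split; [|split].
  - now rewrite length_rev, length_map.
  - intros a Ha. apply in_rev, in_map_iff in Ha as [b [<- Hb]].
    destruct (HA b Hb) as [Ab| ->].
    + left. exact (proj1 (Asym b) Ab).
    + right. apply inv1.
  - now rewrite lprod_rev_inv, Hg.
Qed.

Variable r : R.

Definition within x y : Prop :=
  exists n, prod_of_len mul e A n (mul (inv x) y) /\ INR n <= r.

Lemma within_refl x : 0 <= r -> within x x.
Proof.
  intros hr. exists 0%nat. split; [|exact hr].
  exists nil. simpl. split; [reflexivity|split; [tauto|]]. now rewrite mulVg.
Qed.

Lemma within_sym x y : symmetric_set inv A -> within x y -> within y x.
Proof.
  intros Asym [n [Hn Hr]]. exists n. split; [|exact Hr].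
  apply (prod_of_len_inv _ _ Asym) in Hn. now rewrite invMg, invgK in Hn.
Qed.

Lemma within_word_metric x y :
  within x y <-> exists n, word_metric mul inv e A x y n /\ INR n <= r.
Proof.
  split.
  - intros [m [Hm Hr]].
    destruct (dec_inh_nat_subset_has_unique_least_element
                (fun n => prod_of_len mul e A n (mul (inv x) y))
                (fun n => classic _) (ex_intro _ m Hm)) as [n [[Hn Hmin] _]].
    exists n. split; [split; assumption|].
    apply Rle_trans with (INR m); [apply le_INR, Hmin|]; assumption.
  - intros [n [[Hn _] Hr]]. now exists n.
Qed.

Lemma r_net_iff_dominating N : is_r_net mul inv e A r N <-> dominating within N.
Proof.
  split; intros HN x; destruct (HN x) as [z Hz].
  - destruct Hz as [n [Nz Hn]]. exists z. split; [exact Nz|].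
    apply within_word_metric. now exists n.
  - destruct Hz as [Nz Hxz]. apply within_word_metric in Hxz as [n Hn].
    now exists z, n.
Qed.

Lemma independent_r_net_minimal N :
  independent within N -> is_r_net mul inv e A r N -> is_minimal_r_net mul inv e A r N.
Proof.
  intros Hind Hnet. split; [exact Hnet|].
  intros N' Hsub [x [Nx N'x]] Hnet'. apply N'x.
  apply r_net_iff_dominating in Hnet'.
  exact (independent_dominating_incl within N N' Hind Hsub Hnet' x Nx).
Qed.

End WordMetric.

Theorem corollary2p7 (G : Type) (mul : G -> G -> G) (inv : G -> G) (e : G)
  (HG : is_group mul inv e) (A : G -> Prop)
  (Afin : finite_set A) (Asym : symmetric_set inv A) (Agen : generates mul inv e A)
  (r : R) (hr : 0 <= r) :
  exists N : G -> Prop, is_minimal_r_net mul inv e A r N.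
Proof.
  destruct Afin as [l Hl].
  assert (Henum : exists f : nat -> G, forall g, exists n, f n = g).
  { apply (surj_of_words l (lprod mul e) e). intros g.
    destruct (Agen g) as [w [Hw Hg]]. exists w. split; [|exact Hg].
    intros a Ha. apply Hl. destruct (Hw a Ha) as [Aa|Aa]; [exact Aa|exact (proj2 (Asym a) Aa)]. }
  destruct Henum as [f Hf].
  destruct (exists_independent_dominating (within mul inv e A r)
              (fun x => within_refl mul inv e HG A r x hr)
              (fun x y => within_sym mul inv e HG A r x y Asym) f Hf) as [N [Hind Hdom]].
  exists N. apply independent_r_net_minimal; [exact Hind|].
  now apply r_net_iff_dominating.
Qed.
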